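(* Let $p=2$, and let $F$, $K=F(\sqrt{a})$, $G=\langle\sigma\rangle$, $J$ and $N$ be as in the context. Then, as an $\mathbb{F}_2[G]$-module, $J$ decomposes as an internal direct sum $$J=X\oplus Y\oplus Z,$$ where (1) $X$ has $\mathbb{F}_2$-dimension $1$ if $-1\in N(K^\times)$, and $X=\{0\}$ otherwise; (2) $Y$ is a free $\mathbb{F}_2[G]$-submodule with $Y^G=N(J)$; (3) $Z$ is a trivial $\mathbb{F}_2[G]$-module. Moreover, the rank of any maximal free $\mathbb{F}_2[G]$-submodule of $J$ equals $\dim_{\mathbb{F}_2}N(J)$.
   Context: Let $F$ be a field of characteristic different from $2$. Let $a\in F^\times\setminus F^{\times 2}$ and $K=F(\sqrt{a})$, a quadratic extension; $K^\times=K\setminus\{0\}$. Let $G=\mathrm{Gal}(K/F)=\langle\sigma\rangle$ with $\sigma(\sqrt a)=-\sqrt a$. Let $J=K^\times/K^{\times 2}$, an $\mathbb{F}_2[G]$-module (elements denoted $[\gamma]$, $\gamma\in K^\times$). For a $G$-module $V$, $V^G$ denotes the submodule of $G$-fixed elements. Let $N=1+\sigma\in\mathbb{F}_2[G]$, also viewed as the endomorphism of $J$ it induces; $N(J)$ is its image. $N(K^\times)\subseteq F^\times$ denotes the group of norms from $K$ to $F$. *)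

From HB Require Import structures.
From mathcomp Require Import all_boot all_order all_algebra all_field.
From mathcomp Require Import boolp classical_sets cardinality.
Set Implicit Arguments. Unset Strict Implicit. Unset Printing Implicit Defensive.
Import GRing.Theory.
Local Open Scope classical_set_scope.
Local Open Scope ring_scope.

(* J = K^x / K^x2 is modelled inside K: a subset of J is represented by its
   preimage in K^x, a subset S : set K of nonzero elements that is a union of
   classes mod K^x2.  The F_2-structure of J is written multiplicatively. *)
Section JDefs.
Variables (K : fieldType) (sigma : K -> K).

(* x is a nonzero square, i.e. [x] = 0 in J *)
Definition sq (x : K) : Prop := exists y : K, y != 0 /\ x = y ^+ 2.

Definition subspJ (S : set K) : Prop :=
  [/\ (forall x, S x -> x != 0),
      (forall y, sq y -> S y) &
      (forall x y, S x -> S y -> S (x * y))].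

Definition submodJ (S : set K) : Prop := subspJ S /\ (forall x, S x -> S (sigma x)).

Definition inB (B : set K) (s : seq K) : Prop := forall b, b \in s -> B b.

Definition indepJ (B : set K) : Prop :=
  forall s : seq K, uniq s -> inB B s -> sq (\prod_(b <- s) b) -> s = [::].

Definition spanJ (B : set K) (x : K) : Prop :=
  exists s : seq K, inB B s /\ sq (x / \prod_(b <- s) b).

(* B is (a set of representatives of) an F_2-basis of S *)
Definition F2basis (S B : set K) : Prop :=
  [/\ B `<=` S, indepJ B & forall x, S x -> spanJ B x].

(* B is an F_2[G]-basis of S: the family ([b], sigma[b])_{b in B} is an
   F_2-basis of S. *)
Definition freebasis (S B : set K) : Prop :=
  [/\ B `<=` S,
      (forall s t : seq K, uniq s -> uniq t -> inB B s -> inB B t ->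
          sq ((\prod_(b <- s) b) * \prod_(b <- t) sigma b) -> s = [::] /\ t = [::]) &
      (forall x, S x -> exists s t : seq K, [/\ inB B s, inB B t &
          sq (x / ((\prod_(b <- s) b) * \prod_(b <- t) sigma b))])].

Definition freeJ (S : set K) : Prop := submodJ S /\ exists B, freebasis S B.

Definition maxfreeJ (S : set K) : Prop :=
  freeJ S /\ forall S', freeJ S' -> S `<=` S' -> S' = S.

Definition dsum3 (X Y Z : set K) : Prop :=
  (forall g : K, g != 0 -> exists x y z, [/\ X x, Y y, Z z & g = x * y * z])
  /\ (forall x y z, X x -> Y y -> Z z -> sq (x * y * z) -> [/\ sq x, sq y & sq z]).

Definition zeroJ (S : set K) : Prop := forall x, S x -> sq x.

Definition fixedJ (S : set K) : set K := [set x | S x /\ sq (sigma x / x)].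

(* N(J), the image of N = 1 + sigma on J *)
Definition NJ : set K :=
  [set x | exists g : K, g != 0 /\ sq (x / (g * sigma g))].

Definition trivialJ (S : set K) : Prop := forall x, S x -> sq (sigma x / x).

Definition minus1_norm : Prop := exists g : K, g != 0 /\ g * sigma g = -1.

End JDefs.

From HB Require Import structures.
From mathcomp Require Import all_boot all_order all_algebra all_field.
From mathcomp Require Import boolp classical_sets cardinality.
From mathcomp Require Import ring functions.
Set Implicit Arguments. Unset Strict Implicit. Unset Printing Implicit Defensive.
Import GRing.Theory.
Local Open Scope classical_set_scope.
Local Open Scope ring_scope.

(* Choose [B] so that the norms [b * sigma b] (b in B) give an F_2-basis of
   N(J).  The classes of the [b] and [sigma b] are then independent, and span
   a free submodule [Y] with [Y^G = N(J)]: a fixed [y] in [Y] has a square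
   norm, and independence of the norms forces [y] to be a norm class.  If
   [-1 = Nm g], Hilbert 90 applied to [g ^+ 2] gives a fixed class [x0] outside
   N(J) (otherwise [x0 = 1]); [Z] is spanned by a complement of
   [N(J) + <x0>] in [J^G].  Any [g] is a product of elements of [Y] times a
   fixed class, whence [J = X + Y + Z].  The norms of a basis of any maximal
   free submodule again form a basis of N(J), and two bases of one F_2-space
   are equipotent: compare [2 ^ n] in the finite case, use [|C * nat| = |C|]
   in the infinite one. *)

Section Squares.
Variable K : fieldType.
Implicit Types (x y z : K) (s t : seq K) (B V : set K) (f : K -> K).

Lemma sq_neq0 x : sq x -> x != 0.
Proof. by case=> y [y0 ->]; rewrite expf_neq0. Qed.

Lemma sq1 : sq (1 : K).
Proof. by exists 1; rewrite oner_neq0 expr1n. Qed.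

Lemma sq_expr2 x : x != 0 -> sq (x ^+ 2).
Proof. by exists x. Qed.

Lemma sqM x y : sq x -> sq y -> sq (x * y).
Proof.
case=> u [u0 ->] [v [v0 ->]]; exists (u * v).
by rewrite mulf_neq0 // exprMn.
Qed.

Lemma sqV x : sq x -> sq x^-1.
Proof. by case=> u [u0 ->]; exists u^-1; rewrite invr_eq0 exprVn. Qed.

Lemma sq_div x y : sq x -> sq y -> sq (x / y).
Proof. by move=> hx /sqV; apply: sqM. Qed.

Lemma sq_eq x y : x = y -> sq x -> sq y.
Proof. by move->. Qed.

Lemma sq_cancell x y : sq x -> sq (x * y) -> sq y.
Proof. by move=> hx /sq_div /(_ hx); rewrite mulrC mulKf ?sq_neq0. Qed.

Lemma sq_prod s f : (forall b, b \in s -> sq (f b)) -> sq (\prod_(b <- s) f b).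
Proof.
elim: s => [|b s IH] h; first by rewrite big_nil; exact: sq1.
rewrite big_cons; apply: sqM; first by apply: h; rewrite mem_head.
by apply: IH => c cs; apply: h; rewrite in_cons cs orbT.
Qed.

Lemma sq_div_neq0 x y : sq (x / y) -> x != 0.
Proof. by move/sq_neq0; apply: contraNneq => ->; rewrite mul0r. Qed.

Lemma sq_divM x1 x2 y1 y2 :
  sq (x1 / y1) -> sq (x2 / y2) -> sq (x1 * x2 / (y1 * y2)).
Proof. by move=> h1 h2; apply: sq_eq (sqM h1 h2); rewrite invfM; ring. Qed.

Lemma sq_div_trans y x z : y != 0 -> sq (x / y) -> sq (y / z) -> sq (x / z).
Proof.
move=> y0 h1 h2; have -> : x / z = x / y * (y / z) by rewrite mulrA divfK.
exact: sqM.
Qed.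

Lemma sqM_div z x y : z != 0 -> sq (x / z) -> sq (y / z) -> sq (x * y).
Proof.
move=> z0 hx hy; have -> : x * y = x / z * (y / z) * z ^+ 2 by rewrite expr2; field.
by apply: sqM; [apply: sqM | apply: sq_expr2].
Qed.

End Squares.

Section ModSquares.
Variable K : fieldType.
Implicit Types (x y : K) (s t : seq K) (B S V : set K) (f : K -> K).

Definition nonzero_on f B := forall b, B b -> f b != 0.

Definition indep_mod V f B := forall s, uniq s -> inB B s ->
  V (\prod_(b <- s) f b) -> s = [::].

Definition span_mod V f B y := exists s, inB B s /\ V (y / \prod_(b <- s) f b).

(* The preimage in [K] of a subgroup of [K^x / K^x2]. *)
Definition sq_group V := (forall y, sq y -> V y) /\ (forall x y, V x -> V y -> V (x / y)).

Lemma sq_group_sq : sq_group (@sq K).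
Proof. by split=> // x y; apply: sq_div. Qed.

Lemma inB_cons B b s : inB B (b :: s) -> B b /\ inB B s.
Proof.
move=> h; split; first by apply: h; rewrite mem_head.
by move=> c cs; apply: h; rewrite in_cons cs orbT.
Qed.

Lemma inB_sub B s t : {subset s <= t} -> inB B t -> inB B s.
Proof. by move=> st h b /st; apply: h. Qed.

Lemma inB_cat B s t : inB B s -> inB B t -> inB B (s ++ t).
Proof. by move=> hs ht b; rewrite mem_cat => /orP[/hs|/ht]. Qed.

Lemma inB_prod_neq0 B f s : nonzero_on f B -> inB B s -> \prod_(b <- s) f b != 0.
Proof. by move=> nz h; rewrite prodf_seq_neq0; apply/allP => b /h /nz. Qed.

Lemma prod_rem f s b : b \in s -> \prod_(c <- s) f c = f b * \prod_(c <- rem b s) f c.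
Proof. by move=> bs; rewrite (perm_big _ (perm_to_rem bs)) big_cons. Qed.

Lemma indep_sq_perm_eq B f : indep_mod (@sq K) f B -> nonzero_on f B ->
  forall s t, uniq s -> uniq t -> inB B s -> inB B t ->
  sq (\prod_(b <- s) f b * \prod_(b <- t) f b) -> perm_eq s t.
Proof.
move=> ind nz; elim=> [|b s IH] t us ut Bs Bt.
  by rewrite big_nil mul1r => /ind -/(_ ut Bt) ->.
move: us => /= /andP[bs us]; have [Bb Bs'] := inB_cons Bs.
have [bt|bt] := boolP (b \in t).
  rewrite big_cons (prod_rem _ bt) => hsq.
  have /IH : sq (\prod_(c <- s) f c * \prod_(c <- rem b t) f c).
    apply: (sq_cancell (sq_expr2 (nz _ Bb))); apply: sq_eq hsq.
    by rewrite expr2; ring.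
  move=> /(_ us (rem_uniq _ ut) Bs' (inB_sub (@mem_rem _ b _) Bt)) p.
  by rewrite perm_sym (perm_trans (perm_to_rem bt)) // perm_cons perm_sym.
move=> hsq; have : perm_eq s (b :: t).
  apply: IH => //; first by rewrite /= bt ut.
    by move=> c; rewrite in_cons => /orP[/eqP->|/Bt].
  by apply: sq_eq hsq; rewrite !big_cons; ring.
by move/perm_mem => /(_ b); rewrite mem_head (negbTE bs).
Qed.

(* Cancelling repeated factors in pairs. *)
Lemma prod_sq_uniq B f s : nonzero_on f B -> inB B s -> exists u, [/\ uniq u,
  inB B u, {subset u <= s} & sq (\prod_(b <- s) f b / \prod_(b <- u) f b)].
Proof.
move=> nz; elim: s => [|b s IH] Bs.
  by exists [::]; split => //; rewrite big_nil divr1; exact: sq1.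
have [Bb /IH [u [uu Bu su hu]]] := inB_cons Bs.
have hb := nz _ Bb; have hU := inB_prod_neq0 nz Bu.
have [bu|bu] := boolP (b \in u).
  have Br : inB B (rem b u) := inB_sub (@mem_rem _ b _) Bu.
  exists (rem b u); split => //; first exact: rem_uniq.
    by move=> c /mem_rem /su cs; rewrite in_cons cs orbT.
  move: hu; rewrite (prod_rem _ bu) => hu.
  apply: sq_eq (sqM hu (sq_expr2 hb)); rewrite big_cons; field.
  by rewrite hb (inB_prod_neq0 nz Br).
exists (b :: u); split.
- by rewrite /= bu uu.
- by move=> c; rewrite in_cons => /orP[/eqP->|/Bu].
- by move=> c; rewrite !in_cons => /orP[->|/su->] //; rewrite orbT.
by apply: sq_eq hu; rewrite !big_cons; field; rewrite hb hU.
Qed.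

Lemma indep_mod_setU1 V f B x : sq_group V -> nonzero_on f B -> indep_mod V f B ->
  ~ span_mod V f B (f x) -> indep_mod V f (B `|` [set x]).
Proof.
move=> [Vsq Vdiv] nz ind nsp s us Bs hV.
have [xs|xs] := boolP (x \in s); last first.
  by apply: ind => // c cs; case: (Bs _ cs) => // /= ceq; rewrite -ceq cs in xs.
have Br : inB B (rem x s).
  move=> c; rewrite (mem_rem_uniq _ us) inE => /andP[cx cs].
  by case: (Bs _ cs) => // /= /eqP; rewrite (negbTE cx).
exfalso; apply: nsp; exists (rem x s); split => //.
have hR := inB_prod_neq0 nz Br.
have -> : f x / \prod_(c <- rem x s) f c =
    \prod_(c <- s) f c / (\prod_(c <- rem x s) f c) ^+ 2.
  by rewrite (prod_rem _ xs); field.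
exact: Vdiv _ _ hV (Vsq _ (sq_expr2 hR)).
Qed.

Lemma inB_chain (F : set (set K)) s : total_on F subset ->
  inB (\bigcup_(X in F) X) s -> s = [::] \/ exists2 X, F X & inB X s.
Proof.
move=> tot; elim: s => [|b s IH] h; first by left.
right; have [[Xb FXb Xbb] /IH [->|[X FX Xs]]] := inB_cons h.
  by exists Xb => // c; rewrite inE => /eqP->.
have [XbX|XXb] := tot _ _ FXb FX.
  by exists X => // c; rewrite in_cons => /orP[/eqP->|/Xs //]; apply: XbX.
by exists Xb => // c; rewrite in_cons => /orP[/eqP->//|/Xs]; apply: XXb.
Qed.

Lemma exists_basis_mod V f S : sq_group V -> nonzero_on f S ->
  exists D, [/\ D `<=` S, indep_mod V f D & forall x, S x -> span_mod V f D (f x)].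
Proof.
move=> Vg nz; pose P D := D `<=` S /\ indep_mod V f D.
have [D [[DS ind] mx]] : exists A, P A /\ forall B, A `<` B -> ~ P B.
  apply: Zorn_bigcup => F FP tot; split.
    by move=> x [X FX Xx]; case: (FP _ FX) => + _; apply.
  move=> s us Bs hV; case: (inB_chain tot Bs) => [//|[X FX Xs]].
  by case: (FP _ FX) => _; apply.
exists D; split => // x Sx; apply: contrapT => nsp.
have xD : ~ D x.
  move=> Dx; apply: nsp; exists [:: x]; split; first by move=> c; rewrite inE => /eqP->.
  by rewrite big_seq1 divff ?nz //; apply: Vg.1; exact: sq1.
apply: (mx (D `|` [set x])).
  by split=> [y Dy|/(_ x (or_intror erefl))//]; left.
split; first by move=> y [/DS|-> //].
by apply: indep_mod_setU1 => // b /DS; apply: nz.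
Qed.

End ModSquares.

Section Involution.
Variables (K : fieldType) (sg : {rmorphism K -> K}).
Hypothesis sgK : involutive sg.
Implicit Types (x y z g : K) (s t : seq K) (B C D V : set K) (f : K -> K).

Definition Nm x := x * sg x.

Lemma sg_eq0 x : (sg x == 0) = (x == 0).
Proof. exact: fmorph_eq0. Qed.

Lemma sg_sq x : sq x -> sq (sg x).
Proof. by case=> y [y0 ->]; exists (sg y); rewrite sg_eq0 rmorphXn. Qed.

Lemma sq_sg_div x y : sq (x / y) -> sq (sg x / sg y).
Proof. by move/sg_sq; rewrite rmorphM fmorphV. Qed.

Lemma Nm_sg x : Nm (sg x) = Nm x.
Proof. by rewrite /Nm sgK mulrC. Qed.

Lemma NmM x y : Nm (x * y) = Nm x * Nm y.
Proof. by rewrite /Nm rmorphM; ring. Qed.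

Lemma NmV x : Nm x^-1 = (Nm x)^-1.
Proof. by rewrite /Nm fmorphV invfM. Qed.

Lemma Nm_div x y : Nm (x / y) = Nm x / Nm y.
Proof. by rewrite NmM NmV. Qed.

Lemma Nm_eq0 x : (Nm x == 0) = (x == 0).
Proof. by rewrite /Nm mulf_eq0 sg_eq0 orbb. Qed.

Lemma Nm_sq x : sq x -> sq (Nm x).
Proof. by move=> h; apply: sqM => //; apply: sg_sq. Qed.

Lemma Nm_prod s f : Nm (\prod_(b <- s) f b) = \prod_(b <- s) Nm (f b).
Proof. by rewrite /Nm rmorph_prod -big_split. Qed.

Lemma sq_NmE x : x != 0 -> sq (Nm x) <-> sq (sg x / x).
Proof.
move=> x0; split=> h.
  have -> : sg x / x = Nm x / x ^+ 2 by rewrite /Nm expr2; field.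
  by apply: sq_div => //; apply: sq_expr2.
have -> : Nm x = x ^+ 2 * (sg x / x) by rewrite /Nm expr2; field.
by apply: sqM => //; apply: sq_expr2.
Qed.

Lemma NJ_sq x : sq x -> NJ sg x.
Proof. by exists 1; rewrite oner_neq0 rmorph1 !mulr1 divr1. Qed.

Lemma NJ_neq0 x : NJ sg x -> x != 0.
Proof. by case=> g [_ /sq_div_neq0]. Qed.

Lemma NJ_Nm g : g != 0 -> NJ sg (Nm g).
Proof. by exists g; rewrite divff ?Nm_eq0 //; split => //; exact: sq1. Qed.

Lemma NJM x y : NJ sg x -> NJ sg y -> NJ sg (x * y).
Proof.
case=> g [g0 hg] [h [h0 hh]]; exists (g * h); rewrite mulf_neq0 //.
by split => //; apply: sq_eq (sq_divM hg hh); rewrite rmorphM; congr (_ / _); ring.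
Qed.

Lemma NJV x : NJ sg x -> NJ sg x^-1.
Proof.
case=> g [g0 hg]; exists g^-1; rewrite invr_eq0; split => //.
by apply: sq_eq (sqV hg); rewrite fmorphV !invfM invrK.
Qed.

Lemma NJ_div x y : NJ sg x -> NJ sg y -> NJ sg (x / y).
Proof. by move=> hx /NJV; apply: NJM. Qed.

Lemma NJ_sq_div x y : NJ sg x -> sq (y / x) -> NJ sg y.
Proof.
move=> hx /NJ_sq /(NJM hx); rewrite mulrC divfK //; exact: NJ_neq0.
Qed.

Lemma NJ_fixed x : NJ sg x -> sq (sg x / x).
Proof.
case=> g [g0 hg]; have := sq_sg_div hg; rewrite rmorphM sgK (mulrC (sg g)) => h.
have hn : g * sg g != 0 by rewrite mulf_neq0 ?sg_eq0.
have -> : sg x / x = (sg x / (g * sg g)) / (x / (g * sg g)).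
  by rewrite invf_div mulrA divfK.
exact: sq_div.
Qed.


Section FreePart.
Variable B : set K.
Hypothesis Bnz : nonzero_on id B.
Hypothesis Bind : indep_mod (@sq K) (Nm) B.
Hypothesis Bspan : forall g, g != 0 -> span_mod (@sq K) (Nm) B (Nm g).

Let BnzNm : nonzero_on (Nm) B.
Proof. by move=> b /Bnz; rewrite Nm_eq0. Qed.

Let Bnzsg : nonzero_on sg B.
Proof. by move=> b /Bnz; rewrite sg_eq0. Qed.

Definition orbprod s t := (\prod_(b <- s) b) * \prod_(b <- t) sg b.

Definition freespan : set K :=
  [set y | exists s t, [/\ inB B s, inB B t & sq (y / orbprod s t)]].

Lemma orbprod_neq0 s t : inB B s -> inB B t -> orbprod s t != 0.
Proof.
by move=> Bs Bt; rewrite mulf_neq0 ?(inB_prod_neq0 Bnz) ?(inB_prod_neq0 Bnzsg).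
Qed.

Lemma Nm_orbprod s t :
  Nm (orbprod s t) = (\prod_(b <- s) Nm b) * \prod_(b <- t) Nm b.
Proof. by rewrite NmM !Nm_prod; congr (_ * _); apply: eq_bigr => b _; rewrite Nm_sg. Qed.

Lemma freespan_uniq y : freespan y -> exists s t, [/\ uniq s, uniq t, inB B s,
  inB B t & sq (y / orbprod s t)].
Proof.
case=> s [t [Bs Bt h]].
have [u [uu Bu _ hu]] := prod_sq_uniq Bnz Bs.
have [v [uv Bv _ hv]] := prod_sq_uniq Bnzsg Bt.
exists u, v; split => //; apply: sq_div_trans (orbprod_neq0 Bs Bt) h _.
exact: sq_divM.
Qed.

Lemma NJ_freespan y : NJ sg y -> freespan y.
Proof.
case=> g [g0 hg]; have [s [Bs hs]] := Bspan g0.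
exists s, s; split => //; rewrite /orbprod -big_split /=.
apply: sq_div_trans hg hs; first by rewrite -/(Nm g) Nm_eq0.
Qed.

Lemma freespan_NJ y : freespan y -> sq (Nm y) -> NJ sg y.
Proof.
move=> /freespan_uniq [s [t [us ut Bs Bt h]]] hN.
have w0 := orbprod_neq0 Bs Bt.
have : sq ((\prod_(b <- s) Nm b) * \prod_(b <- t) Nm b).
  rewrite -Nm_orbprod; have := sq_div hN (Nm_sq h); rewrite Nm_div.
  by apply: sq_eq; field; rewrite !Nm_eq0 w0 (sq_div_neq0 h).
move=> /(indep_sq_perm_eq Bind BnzNm us ut Bs Bt) p.
apply: NJ_sq_div (NJ_Nm (inB_prod_neq0 Bnz Bs)) _.
by rewrite /Nm rmorph_prod [X in _ / (_ * X)](perm_big _ p).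
Qed.

Lemma freespan_submod : submodJ sg freespan.
Proof.
split; first split.
- by move=> y [s [t [_ _ /sq_div_neq0]]].
- by move=> y hy; exists [::], [::]; rewrite /orbprod !big_nil mulr1 divr1.
- move=> x y [s1 [t1 [Bs1 Bt1 h1]]] [s2 [t2 [Bs2 Bt2 h2]]].
  exists (s1 ++ s2), (t1 ++ t2); split; try exact: inB_cat.
  by apply: sq_eq (sq_divM h1 h2); rewrite /orbprod !big_cat /=; congr (_ / _); ring.
- move=> y [s [t [Bs Bt h]]]; exists t, s; split => //.
  apply: sq_eq (sq_sg_div h); rewrite /orbprod rmorphM !rmorph_prod.
  by rewrite (eq_bigr _ (fun b _ => sgK b)) [X in _ / X]mulrC.
Qed.

Lemma freebasis_freespan : freebasis sg freespan B.
Proof.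
split.
- move=> b Bb; exists [:: b], [::]; split => //; first by move=> c; rewrite inE => /eqP->.
  by rewrite /orbprod big_seq1 big_nil mulr1 divff ?(Bnz Bb) //; exact: sq1.
- move=> s t us ut Bs Bt h.
  have := Nm_sq h; rewrite -/(orbprod s t) Nm_orbprod.
  move=> /(indep_sq_perm_eq Bind BnzNm us ut Bs Bt) p.
  move: h; rewrite -(perm_big _ p) -big_split => /(Bind us Bs) s0; split => //.
  by move: p; rewrite s0 => /perm_size /= /esym /size0nil.
- by move=> x [s [t [Bs Bt h]]]; exists s, t.
Qed.

Lemma fixedJ_freespan : fixedJ sg freespan = NJ sg.
Proof.
apply/funext => x; apply/propext; split.
  case=> Yx hx; apply: freespan_NJ => //; apply/sq_NmE => //.
  by case: Yx => s [t [_ _ /sq_div_neq0]].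
by move=> hx; split; [exact: NJ_freespan | exact: NJ_fixed].
Qed.


Section DirectSum.
Variable x0 : K.
Hypotheses (x0_neq0 : x0 != 0) (x0_fixed : sq (sg x0 / x0)) (x0_NJ : NJ sg x0 -> sq x0).

Definition lineJ : set K := [set y | sq y \/ sq (y / x0)].

Lemma F2basis_lineJ : ~ sq x0 -> F2basis lineJ [set x0].
Proof.
move=> nsq; split.
- by move=> y ->; right; rewrite divff //; exact: sq1.
- case=> [//|a [|b s]] us Ds hs.
    by move: hs; rewrite big_seq1 (Ds a (mem_head _ _)).
  have ea : a = x0 := Ds a (mem_head _ _).
  have eb : b = x0 by apply: Ds; rewrite !inE eqxx orbT.
  by move: us; rewrite ea eb /= inE eqxx.
- move=> y [hy|hy]; first by exists [::]; rewrite big_nil divr1.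
  by exists [:: x0]; rewrite big_seq1; split => // c; rewrite inE => /eqP->.
Qed.

Lemma zeroJ_lineJ : sq x0 -> zeroJ lineJ.
Proof. by move=> h y [//|/sqM /(_ h)]; rewrite divfK. Qed.

Definition NJ_adjoin : set K := [set y | NJ sg y \/ NJ sg (y * x0)].

Variable D : set K.
Hypothesis D_fixed : forall d, D d -> d != 0 /\ sq (sg d / d).
Hypothesis Dind : indep_mod NJ_adjoin id D.
Hypothesis Dspan : forall x, x != 0 -> sq (sg x / x) -> span_mod NJ_adjoin id D x.

Let Dnz : nonzero_on id D.
Proof. by move=> d /D_fixed []. Qed.

Lemma NJ_adjoin_group : sq_group NJ_adjoin.
Proof.
split=> [y /NJ_sq|x y]; first by left.
have NJ_x0 y' : NJ sg (y' * x0) -> y' != 0.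
  by move/NJ_neq0; rewrite mulf_eq0 negb_or => /andP[].
move=> [hx|hx] [hy|hy].
- by left; apply: NJ_div.
- right; have -> : x / y * x0 = x / (y * x0) * x0 ^+ 2.
    by rewrite expr2 invfM; field; rewrite x0_neq0 NJ_x0.
  by apply: NJM; [apply: NJ_div|apply/NJ_sq/sq_expr2].
- by right; rewrite mulrAC; apply: NJ_div.
- left; have -> : x / y = x * x0 / (y * x0).
    by rewrite invfM; field; rewrite x0_neq0 NJ_x0.
  exact: NJ_div.
Qed.

Lemma lineJ_submod : submodJ sg lineJ.
Proof.
split; first split.
- by move=> y [/sq_neq0|/sq_div_neq0].
- by move=> y hy; left.
- move=> x y [hx|hx] [hy|hy].
  + by left; apply: sqM.
  + by right; rewrite -mulrA; apply: sqM.
  + by right; rewrite mulrAC; apply: sqM.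
  + left; have -> : x * y = x / x0 * (y / x0) * x0 ^+ 2 by rewrite expr2; field.
    by apply: sqM; [apply: sqM|apply: sq_expr2].
- move=> y [hy|hy]; first by left; apply: sg_sq.
  by right; apply: sq_div_trans (sq_sg_div hy) _; rewrite ?sg_eq0.
Qed.

Lemma sq_fixed_prod s : inB D s -> sq (sg (\prod_(b <- s) b) / \prod_(b <- s) b).
Proof.
by move=> Ds; rewrite rmorph_prod -prodf_div; apply: sq_prod => b /Ds /D_fixed [].
Qed.

Lemma spanJ_submod : submodJ sg (spanJ D).
Proof.
split; first split.
- by move=> y [s [_ /sq_div_neq0]].
- by move=> y hy; exists [::]; rewrite big_nil divr1.
- move=> x y [s1 [Ds1 h1]] [s2 [Ds2 h2]].
  exists (s1 ++ s2); split; first exact: inB_cat.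
  by apply: sq_eq (sq_divM h1 h2); rewrite big_cat.
- move=> y [s [Ds h]]; exists s; split => //.
  apply: sq_div_trans (sq_sg_div h) (sq_fixed_prod Ds).
  by rewrite sg_eq0 (inB_prod_neq0 Dnz Ds).
Qed.

Lemma spanJ_trivial : trivialJ sg (spanJ D).
Proof.
move=> z [s [Ds h]]; have hP := inB_prod_neq0 Dnz Ds.
have -> : sg z / z = sg (z / \prod_(b <- s) b) / (z / \prod_(b <- s) b) *
    (sg (\prod_(b <- s) b) / \prod_(b <- s) b).
  rewrite rmorphM fmorphV; field.
  by rewrite hP (sq_div_neq0 h) sg_eq0 hP.
by apply: sqM; [apply: sq_div => //; apply: sg_sq | apply: sq_fixed_prod].
Qed.

Lemma lineJ_Nm_sq x : lineJ x -> sq (Nm x).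
Proof.
case=> h; first exact: Nm_sq.
rewrite -(divfK x0_neq0 x) NmM; apply: sqM; first exact: Nm_sq.
exact/sq_NmE.
Qed.

Lemma spanJ_Nm_sq z : spanJ D z -> sq (Nm z).
Proof.
by move=> hz; apply/sq_NmE; [case: hz => s [_ /sq_div_neq0] | exact: spanJ_trivial].
Qed.

Lemma dsum3_generate g : g != 0 ->
  exists x y z, [/\ lineJ x, freespan y, spanJ D z & g = x * y * z].
Proof.
move=> g0; have [s [Bs hs]] := Bspan g0.
have hP := inB_prod_neq0 Bnz Bs; set y := \prod_(b <- s) b in hP *.
have Yy : freespan y.
  by exists s, [::]; rewrite /orbprod big_nil mulr1 divff //; split => //; exact: sq1.
have w0 : g / y != 0 by rewrite mulf_neq0 ?invr_eq0.
have /(Dspan w0) [u [Du hu]] : sq (sg (g / y) / (g / y)).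
  by apply/sq_NmE => //; rewrite Nm_div /y Nm_prod.
have hU := inB_prod_neq0 Dnz Du; set z := \prod_(b <- u) b in hU hu.
have Zz : spanJ D z by exists u; rewrite divff //; split => //; exact: sq1.
set r := g / y / z in hu.
have er : g = y * r * z by rewrite /r; field; rewrite hP hU.
case: hu => [hr|hr].
  exists 1, (y * r), z; split => //; first by left; exact: sq1.
    by case: freespan_submod => -[_ _ YM] _; apply/YM/NJ_freespan.
  by rewrite mul1r.
exists x0^-1, (y * (r * x0)), z; split.
- by right; rewrite -[x0^-1 / x0]expr2; apply: sq_expr2; rewrite invr_eq0.
- by case: freespan_submod => -[_ _ YM] _; apply/YM/NJ_freespan.
- exact: Zz.
- by rewrite er; field.
Qed.

Lemma spanJ_NJ_adjoin_sq z : spanJ D z -> NJ_adjoin z -> sq z.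
Proof.
case=> u0 [Du0 hu0] hz; have [u [uu Du _ hu]] := prod_sq_uniq Dnz Du0.
have hU0 := inB_prod_neq0 Dnz Du0.
have hzu : sq (z / \prod_(b <- u) b) by apply: sq_div_trans hU0 hu0 hu.
suff /(Dind uu Du) u0nil : NJ_adjoin (\prod_(b <- u) id b).
  by move: hzu; rewrite u0nil big_nil divr1.
have -> : \prod_(b <- u) id b = z / (z / \prod_(b <- u) b).
  by field; rewrite (sq_div_neq0 hu0) (inB_prod_neq0 Dnz Du).
by apply: NJ_adjoin_group.2 hz _; left; apply: NJ_sq.
Qed.

Lemma dsum3_indep x y z : lineJ x -> freespan y -> spanJ D z ->
  sq (x * y * z) -> [/\ sq x, sq y & sq z].
Proof.
move=> Xx Yy Zz h.
have x_neq0 : x != 0 by case: Xx => [/sq_neq0|/sq_div_neq0].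
have y_neq0 : y != 0 by case: Yy => s [t [_ _ /sq_div_neq0]].
have z_neq0 : z != 0 by case: Zz => s [_ /sq_div_neq0].
have NJy : NJ sg y.
  apply: freespan_NJ => //.
  have -> : Nm y = Nm (x * y * z) / (Nm x * Nm z).
    by rewrite !NmM; field; rewrite !Nm_eq0 x_neq0 z_neq0.
  apply: sq_div; first exact: Nm_sq.
  by apply: sqM; [apply: lineJ_Nm_sq | apply: spanJ_Nm_sq].
have sqz : sq z.
  apply: spanJ_NJ_adjoin_sq => //; case: Xx => hx; [left | right].
    have -> : z = x * y * z / x / y by field; rewrite x_neq0 y_neq0.
    by apply: NJ_div => //; apply: NJ_div; apply: NJ_sq.
  have -> : z * x0 = x * y * z / (x / x0) / y by field; rewrite x_neq0 y_neq0 x0_neq0.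
  by apply: NJ_div => //; apply: NJ_div; apply: NJ_sq.
have sqxy : sq (x * y) by apply: (sq_cancell sqz); rewrite mulrC.
have sqx : sq x.
  case: Xx => // hx; rewrite -(divfK x0_neq0 x); apply: sqM => //; apply: x0_NJ.
  have -> : x0 = x * y / (x / x0) / y by field; rewrite x_neq0 y_neq0 x0_neq0.
  by apply: NJ_div => //; apply: NJ_div; apply: NJ_sq.
by split => //; apply: sq_cancell sqx sqxy.
Qed.

Lemma dsum3_line_free_span : dsum3 lineJ freespan (spanJ D).
Proof. by split; [exact: dsum3_generate | exact: dsum3_indep]. Qed.

End DirectSum.
End FreePart.

Lemma J_decomposition x0 : x0 != 0 -> sq (sg x0 / x0) -> (NJ sg x0 -> sq x0) ->
  exists X Y Z : set K,
    [/\ submodJ sg X, submodJ sg Y, submodJ sg Z & dsum3 X Y Z] /\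
    [/\ (~ sq x0 -> F2basis X [set x0]) /\ (sq x0 -> zeroJ X),
        (exists B, freebasis sg Y B) /\ fixedJ sg Y = NJ sg &
        trivialJ sg Z].
Proof.
move=> x0_neq0 x0_fixed x0_NJ.
have [B [Bnz Bind Bspan]] : exists B, [/\ B `<=` [set g | g != 0],
    indep_mod (@sq K) Nm B & forall g, g != 0 -> span_mod (@sq K) Nm B (Nm g)].
  by apply: exists_basis_mod (sq_group_sq K) _ => b b0; rewrite Nm_eq0.
have [D [DG Dind Dspan]] : exists D, [/\ D `<=` [set x | x != 0 /\ sq (sg x / x)],
    indep_mod (NJ_adjoin x0) id D &
    forall x, x != 0 /\ sq (sg x / x) -> span_mod (NJ_adjoin x0) id D x].
  by apply: exists_basis_mod; [exact: NJ_adjoin_group | move=> b []].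
exists (lineJ x0), (freespan B), (spanJ D); split; first split.
- exact: lineJ_submod.
- exact: freespan_submod.
- exact: (spanJ_submod DG).
- have Dspan' x : x != 0 -> sq (sg x / x) -> span_mod (NJ_adjoin x0) id D x.
    by move=> x1 x2; apply: Dspan.
  exact (dsum3_line_free_span Bnz Bind Bspan x0_neq0 x0_fixed x0_NJ DG Dind Dspan').
split.
- by split; [exact: F2basis_lineJ | exact: zeroJ_lineJ].
- by split; [exists B; exact: freebasis_freespan | exact: fixedJ_freespan].
- exact: spanJ_trivial.
Qed.

End Involution.

Local Open Scope card_scope.

Lemma card_le_inj_in (T U : Type) (A : set T) (B : set U) (f : T -> U) :
  (forall x, A x -> B (f x)) -> (forall x y, A x -> A y -> f x = f y -> x = y) ->
  A #<= B.
Proof.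
move=> fAB finj; have [g] : $|{injfun A >-> B}|.
  by apply/injfunPex; exists f => // x y; rewrite !inE; exact: finj.
exact: inj_card_le.
Qed.

Section Cardinality.
Local Open Scope nat_scope.
Variable T : choiceType.
Implicit Types (A C : set T).

Lemma infinite_set_nat_inj A : infinite_set A ->
  exists2 e : nat -> T, (forall n, A (e n)) & injective e.
Proof.
move=> infA; have [a0 _] := infinite_setN0 infA.
have : infinite_set (some @` A).
  by move=> fin; apply: infA; rewrite -(eq_finite_set card_some).
move=> /(proj1 (infiniteP _)) /pcard_leP [e].
have eA n : (some @` A) (e n) by apply: funS.
exists (fun n => odflt a0 (e n)); first by move=> n; case: (eA n) => a Aa <-.
move=> m n /= emn; apply: (inj (f := e)); rewrite ?inE //.
case: (eA m) (eA n) emn => a _ ea [b _ eb].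
by rewrite -ea -eb /= => ab; rewrite ab in ea; exact: etrans (esym ea) eb.
Qed.

Definition graph_dom (G : set ((T * nat) * T)) : set T :=
  [set a | exists n b, G ((a, n), b)].

(* [G] is the graph of an injection [graph_dom G * nat -> graph_dom G], with
   [graph_dom G] contained in [C]. *)
Definition selfprod_graph C (G : set ((T * nat) * T)) : Prop :=
  [/\ (forall p b1 b2, G (p, b1) -> G (p, b2) -> b1 = b2),
      (forall p1 p2 b, G (p1, b) -> G (p2, b) -> p1 = p2),
      (forall a n, graph_dom G a -> exists b, G ((a, n), b)),
      (forall p b, G (p, b) -> graph_dom G b) &
      graph_dom G `<=` C].

Lemma selfprod_graph_bigcup C (F : set (set ((T * nat) * T))) :
  F `<=` selfprod_graph C -> total_on F subset ->
  selfprod_graph C (\bigcup_(G in F) G).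
Proof.
move=> FP tot.
have cmp G1 G2 : F G1 -> F G2 -> exists G, [/\ F G, G1 `<=` G & G2 `<=` G].
  by move=> F1 F2; case: (tot _ _ F1 F2) => h; [exists G2 | exists G1]; split.
split.
- move=> p b1 b2 [G1 F1 h1] [G2 F2 h2]; have [G [FG s1 s2]] := cmp _ _ F1 F2.
  by case: (FP _ FG) => fn _ _ _ _; apply: (fn p); [apply: s1|apply: s2].
- move=> p1 p2 b [G1 F1 h1] [G2 F2 h2]; have [G [FG s1 s2]] := cmp _ _ F1 F2.
  by case: (FP _ FG) => _ fi _ _ _; apply: (fi _ _ b); [apply: s1|apply: s2].
- move=> a n [m [b [G1 F1 h1]]]; case: (FP _ F1) => _ _ ft _ _.
  by have [b' hb'] := ft a n (ex_intro _ m (ex_intro _ b h1)); exists b', G1.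
- move=> p b [G1 F1 h1]; case: (FP _ F1) => _ _ _ fim _.
  by have [m [b' hb']] := fim _ _ h1; exists m, b', G1.
- move=> a [m [b [G1 F1 h1]]]; case: (FP _ F1) => _ _ _ _ fC.
  by apply: fC; exists m, b.
Qed.

(* A copy [e] of [nat] outside the domain carries the extra graph
   [(e k, n) |-> e (pickle (k, n))]. *)
Lemma selfprod_graph_extend C G : selfprod_graph C G ->
  infinite_set (C `\` graph_dom G) -> exists2 G', G `<` G' & selfprod_graph C G'.
Proof.
move=> [fn fi ft fim fC] /infinite_set_nat_inj [e eC eI].
have eA k : ~ graph_dom G (e k) by case: (eC k).
have prI := pcan_inj (@pickleK (nat * nat)%type).
pose G' := G `|` [set q | exists k n, q = ((e k, n), e (pickle (k, n)))].
have dom' a : graph_dom G' a -> graph_dom G a \/ exists k, a = e k.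
  by move=> [n [b [h|[k [m [-> _ _]]]]]]; [left; exists n, b | right; exists k].
exists G'.
  split; first by move=> q h; left.
  move=> /(_ ((e 0, 0), e (pickle (0, 0)))) h; apply: (eA 0).
  by exists 0, (e (pickle (0, 0))); apply: h; right; exists 0, 0.
split.
- move=> [a n] b1 b2 [h1|[k1 [m1 e1]]] [h2|[k2 [m2 e2]]].
  + exact: fn h1 h2.
  + by case: e2 => ea _ _; case: (eA k2); rewrite -ea; exists n, b1.
  + by case: e1 => ea _ _; case: (eA k1); rewrite -ea; exists n, b2.
  + case: e1 => ea1 en1 ->; case: e2 => ea2 en2 ->.
    by rewrite (eI _ _ (etrans (esym ea1) ea2)) -en1 -en2.
- move=> p1 p2 b [h1|[k1 [m1 e1]]] [h2|[k2 [m2 e2]]].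
  + exact: fi h1 h2.
  + by case: e2 => _ eb; case: (eA (pickle (k2, m2))); rewrite -eb; apply: fim h1.
  + by case: e1 => _ eb; case: (eA (pickle (k1, m1))); rewrite -eb; apply: fim h2.
  + case: e1 => -> eb1; case: e2 => -> eb2.
    by case: (prI _ _ (eI _ _ (etrans (esym eb1) eb2))) => -> ->.
- move=> a n /dom' [Aa|[k ->]].
    by have [b hb] := ft a n Aa; exists b; left.
  by exists (e (pickle (k, n))); right; exists k, n.
- move=> p b [h|[k [m [_ ->]]]].
    by have [n [b' hb']] := fim _ _ h; exists n, b'; left.
  by exists 0, (e (pickle (pickle (k, m), 0))); right; exists (pickle (k, m)), 0.
- by move=> a /dom' [Aa|[k ->]]; [exact: fC | case: (eC k)].
Qed.

(* The finitely many points of [C] outside the domain are sent to the columns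
   [(a0, pickle (k.+1, _))]; the domain itself uses the columns [pickle (0, _)]. *)
Lemma card_setX_nat_le_graph C G : selfprod_graph C G ->
  finite_set (C `\` graph_dom G) -> graph_dom G !=set0 -> C `*` [set: nat] #<= C.
Proof.
move=> [_ fi ft fim fC] /(proj1 (finite_seqP _)) [r er] [a0 Aa0].
have prI := pcan_inj (@pickleK (nat * nat)%type).
have [F0 F0P] : {F0 : T * nat -> T & forall p, graph_dom G p.1 -> G (p, F0 p)}.
  apply: (@choice _ _ (fun p b => graph_dom G p.1 -> G (p, b))) => -[a n].
  by case: (pselect (graph_dom G a)) => [/(ft _ n) [b hb] | Aa]; [exists b | exists a].
have F0I a1 a2 m1 m2 : graph_dom G a1 -> graph_dom G a2 ->
    F0 (a1, m1) = F0 (a2, m2) -> a1 = a2 /\ m1 = m2.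
  move=> A1 A2 e; have := fi _ _ _ (F0P (a1, m1) A1).
  by rewrite e => /(_ _ (F0P (a2, m2) A2)) [].
pose h (q : T * nat) := if `[< graph_dom G q.1 >] then F0 (q.1, pickle (0, q.2))
            else F0 (a0, pickle ((index q.1 r).+1, q.2)).
apply: (card_le_inj_in (f := h)).
  move=> [c n] [/= Cc _]; rewrite /h /=; apply: fC.
  case: (asboolP (graph_dom G c)) => [Ac|_]; first exact: fim (F0P (c, _) Ac).
  exact: fim (F0P (a0, _) Aa0).
have in_r c : C c -> ~ graph_dom G c -> c \in r.
  by move=> Cc nAc; have : (C `\` graph_dom G) c by []; rewrite er.
move=> [c1 n1] [c2 n2] [/= C1 _] [/= C2 _]; rewrite /h /=.
case: (asboolP (graph_dom G c1)) => [A1|nA1];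
  case: (asboolP (graph_dom G c2)) => [A2|nA2].
- by move=> /(F0I _ _ _ _ A1 A2) [-> /prI [->]].
- by move=> /(F0I _ _ _ _ A1 Aa0) [_ /prI []].
- by move=> /(F0I _ _ _ _ Aa0 A2) [_ /prI []].
move=> /(F0I _ _ _ _ Aa0 Aa0) [_ /prI [ei ->]].
by rewrite -(nth_index a0 (in_r _ C1 nA1)) -(nth_index a0 (in_r _ C2 nA2)) ei.
Qed.

Lemma card_setX_nat_le C : infinite_set C -> C `*` [set: nat] #<= C.
Proof.
move=> Cinf.
have [G [GC Gmax]] : exists G, selfprod_graph C G /\
    forall G', G `<` G' -> ~ selfprod_graph C G'.
  by apply: Zorn_bigcup => F FP tot; apply: selfprod_graph_bigcup.
have fin : finite_set (C `\` graph_dom G).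
  by apply: contrapT => /(selfprod_graph_extend GC) [G' /Gmax].
have dom_neq0 : graph_dom G !=set0.
  by apply/set0P/eqP => dom0; apply: Cinf; move: fin; rewrite dom0 setD0.
exact: card_setX_nat_le_graph GC fin dom_neq0.
Qed.

End Cardinality.

Section SpanCardinality.
Variable K : fieldType.
Implicit Types (s t u : seq K) (B C : set K) (f g : K -> K).

Lemma span_mod_prod C g f s : nonzero_on g C ->
  (forall b, b \in s -> span_mod (@sq K) g C (f b)) ->
  span_mod (@sq K) g C (\prod_(b <- s) f b).
Proof.
move=> nz; elim: s => [|b s IH] h.
  by exists [::]; rewrite !big_nil divr1; split => //; exact: sq1.
have [t1 [Ct1 h1]] := h b (mem_head _ _).
have [|t2 [Ct2 h2]] := IH; first by move=> c cs; apply: h; rewrite in_cons cs orbT.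
exists (t1 ++ t2); split; first exact: inB_cat.
by rewrite big_cons big_cat; apply: sq_divM.
Qed.

Lemma big_nth_mem (R : comPzSemiRingType) (sc u : seq K) (g : K -> R) :
  uniq sc -> uniq u -> {subset u <= sc} ->
  \prod_(j in [set j : 'I_(size sc) | nth 0 sc j \in u]%SET) g (nth 0 sc j) =
  \prod_(c <- u) g c.
Proof.
move=> usc uu usc'; rewrite -big_enum /=.
rewrite -(big_map (fun j : 'I_(size sc) => nth 0 sc j) xpredT g).
apply: perm_big; apply: uniq_perm => //.
  rewrite map_inj_in_uniq ?enum_uniq // => i j _ _ /eqP.
  by rewrite nth_uniq // => /eqP /val_inj.
move=> c; apply/mapP/idP => [[j]|cu]; first by rewrite mem_enum inE => + ->.
have im : (index c sc < size sc)%N by rewrite index_mem usc'.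
exists (Ordinal im); last by rewrite nth_index ?usc'.
by rewrite mem_enum inE /= nth_index ?usc'.
Qed.

Section FiniteSpan.
Variables (B C : set K) (f g : K -> K) (sc : seq K).
Hypotheses (Bind : indep_mod (@sq K) f B) (Bnz : nonzero_on f B) (Cnz : nonzero_on g C).
Hypothesis BC : forall b, B b -> span_mod (@sq K) g C (f b).
Hypotheses (usc : uniq sc) (Csc : C = [set` sc]).

Let m := size sc.

Lemma prod_sq_index_set t : inB B t -> exists T : {set 'I_m},
  sq (\prod_(b <- t) f b / \prod_(j in T) g (nth 0 sc j)).
Proof.
move=> Bt; have [u0 [Cu0 hu0]] := span_mod_prod Cnz (fun b bt => BC (Bt b bt)).
have [u [uu Cu _ hu]] := prod_sq_uniq Cnz Cu0.
exists [set j : 'I_m | nth 0 sc j \in u]%SET.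
rewrite big_nth_mem // => [|c /Cu]; last by rewrite Csc.
exact: sq_div_trans (inB_prod_neq0 Cnz Cu0) hu0 hu.
Qed.

(* The [2 ^ size s] subproducts of [s] have distinct classes in the span of
   the [m] classes of [C], which has at most [2 ^ m] elements. *)
Lemma indep_size_le s : uniq s -> inB B s -> (size s <= m)%N.
Proof.
move=> us Bs; set n := size s.
pose sA (A : {set 'I_n}) := map (fun i : 'I_n => nth 0 s i) (enum A).
have nthI : injective (fun i : 'I_n => nth 0 s i).
  by move=> i j /eqP; rewrite nth_uniq // => /eqP /val_inj.
have usA A : uniq (sA A) by rewrite map_inj_uniq ?enum_uniq.
have BsA A : inB B (sA A) by move=> b /mapP [i _ ->]; apply/Bs/mem_nth.
have [phi hphi] := choice (fun A => prod_sq_index_set (BsA A)).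
have phiI : injective phi.
  move=> A1 A2 e; have h2 := hphi A2; rewrite -e in h2.
  have hP : \prod_(j in phi A1) g (nth 0 sc j) != 0.
    by apply/prodf_neq0 => j _; apply: Cnz; rewrite Csc /= mem_nth.
  move: (indep_sq_perm_eq Bind Bnz (usA A1) (usA A2) (BsA A1) (BsA A2)
    (sqM_div hP (hphi A1) h2)) => /perm_mem pm.
  apply/setP => i; have := pm (nth 0 s i).
  by rewrite !(mem_map nthI) !mem_enum.
have := leq_card phi phiI.
by rewrite -!cardsT -!powersetT !card_powerset !cardsT !card_ord leq_exp2l.
Qed.

Lemma card_le_span_finite : (B #<= C)%card.
Proof.
have finB : finite_set B.
  apply: contrapT => /infinite_set_nat_inj [e eB eI].
  have hu : uniq (map e (iota 0 m.+1)) by rewrite map_inj_uniq // iota_uniq.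
  have hB : inB B (map e (iota 0 m.+1)) by move=> b /mapP [k _ ->].
  by have := indep_size_le hu hB; rewrite size_map size_iota ltnn.
have [sb0 esb] := (proj1 (finite_seqP _)) finB.
set sb := undup sb0.
have memB b : B b <-> b \in sb by rewrite mem_undup esb.
have hsb : (size sb <= m)%N by apply: indep_size_le; [apply: undup_uniq | move=> b /memB].
have ltm b : b \in sb -> (index b sb < m)%N.
  by move=> bs; apply: leq_trans hsb; rewrite index_mem.
apply: (card_le_inj_in (f := fun b => nth 0 sc (index b sb))).
  by move=> b /memB bs; rewrite Csc /= mem_nth ?ltm.
move=> b1 b2 /memB B1 /memB B2 /eqP; rewrite nth_uniq ?ltm // => /eqP e.
by rewrite -(nth_index 0 B1) -(nth_index 0 B2) e.
Qed.

End FiniteSpan.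

Lemma span_mod_sq_uniq B f y : nonzero_on f B -> span_mod (@sq K) f B y ->
  exists u, [/\ uniq u, inB B u & sq (y / \prod_(b <- u) f b)].
Proof.
move=> nz [t [Bt ht]]; have [u [uu Bu _ hu]] := prod_sq_uniq nz Bt.
by exists u; split => //; apply: sq_div_trans (inB_prod_neq0 nz Bt) ht hu.
Qed.

Section InfiniteSpan.
Variables (B C : set K) (f g : K -> K).
Hypotheses (Bind : indep_mod (@sq K) f B) (Bnz : nonzero_on f B) (Cnz : nonzero_on g C).
Hypothesis BC : forall b, B b -> span_mod (@sq K) g C (f b).
Variable S : K -> seq K.
Hypothesis CS : forall c, C c ->
  [/\ uniq (S c), inB B (S c) & sq (g c / \prod_(b <- S c) f b)].

Lemma support_cover b : B b -> exists2 c, C c & b \in S c.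
Proof.
move=> Bb; have [t [Ct ht]] := BC Bb.
pose L := flatten (map S t).
have BL : inB B L.
  by move=> b' /flattenP [s' /mapP [c /Ct /CS [_ + _] ->]]; apply.
have hL : sq (\prod_(c <- t) g c / \prod_(b <- L) f b).
  rewrite big_flatten big_map -prodf_div; apply: sq_prod => c ct.
  by have [_ _] := CS (Ct _ ct).
have [u [uu Bu uL hu]] := prod_sq_uniq Bnz BL.
have hbu : sq (f b / \prod_(b <- u) f b).
  apply: sq_div_trans (inB_prod_neq0 Cnz Ct) ht _.
  exact: sq_div_trans (inB_prod_neq0 Bnz BL) hL hu.
have Bb1 : inB B [:: b] by move=> c; rewrite inE => /eqP ->.
have /(indep_sq_perm_eq Bind Bnz (s := [:: b]) isT uu Bb1 Bu) /perm_mem bu :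
    sq (\prod_(b0 <- [:: b]) f b0 * \prod_(b0 <- u) f b0).
  rewrite big_seq1; apply: sqM_div (inB_prod_neq0 Bnz Bu) hbu _.
  by rewrite divff ?(inB_prod_neq0 Bnz Bu) //; exact: sq1.
have /uL /flattenP [s' /mapP [c ct ->]] : b \in u by rewrite -bu mem_head.
by exists c => //; apply: Ct.
Qed.

Lemma card_le_span_infinite : infinite_set C -> (B #<= C)%card.
Proof.
move=> Cinf.
have [phi hphi] : {phi : K -> K & forall b, B b -> C (phi b) /\ b \in S (phi b)}.
  apply: (@choice _ _ (fun b c => B b -> C c /\ b \in S c)) => b.
  case: (pselect (B b)) => [/support_cover [c Cc bc] | nBb]; first by exists c.
  by exists 0.
apply: (card_le_trans (B := C `*` [set: nat])); last exact: card_setX_nat_le.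
apply: (card_le_inj_in (f := fun b => (phi b, index b (S (phi b))))).
  by move=> b /hphi [].
move=> b1 b2 /hphi [_ m1] /hphi [_ m2] [e1 e2].
by rewrite -(nth_index 0 m1) -(nth_index 0 m2) e2 e1.
Qed.

End InfiniteSpan.

Lemma card_le_span B C f g : indep_mod (@sq K) f B -> nonzero_on f B ->
  nonzero_on g C -> (forall b, B b -> span_mod (@sq K) g C (f b)) ->
  (forall c, C c -> span_mod (@sq K) f B (g c)) -> (B #<= C)%card.
Proof.
move=> Bind Bnz Cnz BC CB.
have [finC|Cinf] := pselect (finite_set C).
  have [sc0 esc] := (proj1 (finite_seqP _)) finC.
  apply: (card_le_span_finite Bind Bnz Cnz BC (undup_uniq sc0)).
  by apply/seteqP; split => c /=; rewrite ?mem_undup esc.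
have [S CS] : {S : K -> seq K & forall c, C c ->
    [/\ uniq (S c), inB B (S c) & sq (g c / \prod_(b <- S c) f b)]}.
  apply: (@choice _ _ (fun c s => C c ->
    [/\ uniq s, inB B s & sq (g c / \prod_(b <- s) f b)])) => c.
  case: (pselect (C c)) => [/CB /(span_mod_sq_uniq Bnz) [u hu] | nCc]; first by exists u.
  by exists [::].
exact: (card_le_span_infinite Bind Bnz Cnz BC (S := S)).
Qed.

End SpanCardinality.

Section MaximalFree.
Variables (K : fieldType) (sg : {rmorphism K -> K}).
Hypothesis sgK : involutive sg.
Implicit Types (W B C : set K).

Lemma maxfree_norm_basis W B : maxfreeJ sg W -> freebasis sg W B ->
  [/\ nonzero_on id B, indep_mod (@sq K) (Nm sg) B &
      forall g, g != 0 -> span_mod (@sq K) (Nm sg) B (Nm sg g)].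
Proof.
move=> [[[[Wnz _ _] _] _] Wmax] [BW Bind2 Bspan2].
have Bnz : nonzero_on id B by move=> b /BW /Wnz.
have BnzNm : nonzero_on (Nm sg) B by move=> b /Bnz; rewrite Nm_eq0.
have Bind : indep_mod (@sq K) (Nm sg) B.
  move=> s us Bs h; have [] // := Bind2 s s us us Bs Bs.
  by move: h; rewrite /Nm big_split.
split => // g g0; apply: contrapT => nsp.
have Bind' : indep_mod (@sq K) (Nm sg) (B `|` [set g]).
  exact: indep_mod_setU1 (sq_group_sq K) BnzNm Bind nsp.
have Bnz' : nonzero_on id (B `|` [set g]) by move=> b [/Bnz|-> //].
have WY : W `<=` freespan sg (B `|` [set g]).
  move=> w /Bspan2 [s [t [Bs Bt h]]]; exists s, t.
  by split => // b => [/Bs | /Bt]; left.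
have /Wmax eW : freeJ sg (freespan sg (B `|` [set g])).
  by split; [exact: freespan_submod | exists (B `|` [set g]); exact: freebasis_freespan].
have : freespan sg (B `|` [set g]) g.
  by case: (freebasis_freespan sgK Bnz' Bind') => + _ _; apply; right.
rewrite (eW WY) => /Bspan2 [s [t [Bs Bt h]]].
apply: nsp; exists (s ++ t); split; first exact: inB_cat.
by have := Nm_sq sg h; rewrite Nm_div Nm_orbprod // big_cat.
Qed.

Lemma card_maxfree_basis W B C : maxfreeJ sg W -> freebasis sg W B ->
  F2basis (NJ sg) C -> (B #= C)%card.
Proof.
move=> Wmax WB [CN Cind Cspan].
have [Bnz Bind Bspan] := maxfree_norm_basis Wmax WB.
have BnzNm : nonzero_on (Nm sg) B by move=> b /Bnz; rewrite Nm_eq0.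
have Cnz : nonzero_on id C by move=> c /CN /NJ_neq0.
have CB c : C c -> span_mod (@sq K) (Nm sg) B c.
  move=> /CN [g [g0 hg]]; have [s [Bs hs]] := Bspan g g0.
  by exists s; split => //; apply: sq_div_trans hg hs; rewrite Nm_eq0.
have BC b : B b -> span_mod (@sq K) id C (Nm sg b).
  by move=> Bb; apply: Cspan; apply: NJ_Nm; apply: Bnz.
apply: Cantor_Bernstein; first exact: card_le_span Bind BnzNm Cnz BC CB.
exact: card_le_span Cind Cnz BnzNm CB BC.
Qed.

End MaximalFree.

Section MinusOneNorm.
Variables (K : fieldType) (sg : {rmorphism K -> K}) (sqa : K).
Hypotheses (sgK : involutive sg) (sqa_neq0 : sqa != 0) (sg_sqa : sg sqa = - sqa).

Lemma hilbert90 u : u * sg u = 1 -> exists2 x, x != 0 & sg x = u * x.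
Proof.
move=> Nu1; have [->|u_neqN1] := eqVneq u (-1).
  by exists sqa; rewrite // sg_sqa mulN1r.
exists (1 + sg u); last by rewrite rmorphD rmorph1 sgK mulrDr mulr1 Nu1 addrC.
apply: contra_neq u_neqN1 => x0.
have /(congr1 sg) : sg u = -1 by rewrite -(addKr 1 (sg u)) x0 addr0.
by rewrite sgK rmorphN rmorph1.
Qed.

(* If [-1 = Nm g], Hilbert 90 for [g ^+ 2] gives [x0] with [sg x0 = g ^+ 2 * x0];
   writing [x0 = Nm h * e ^+ 2] forces [sg e = +- g e], whence [e = - e]. *)
Lemma minus1_norm_fixed_non_NJ : 2%:R != 0 :> K -> minus1_norm sg ->
  exists x0, [/\ x0 != 0, sq (sg x0 / x0) & ~ NJ sg x0].
Proof.
move=> two_neq0 [g [g0 Ng]].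
have /hilbert90 [x0 x0_neq0 sg_x0] : g ^+ 2 * sg (g ^+ 2) = 1.
  by rewrite rmorphXn -exprMn Ng expr2 mulrNN mulr1.
exists x0; split => //; first by rewrite sg_x0 mulfK //; apply: sq_expr2.
case=> h [h0 [e [e0 he]]].
have N0 : h * sg h != 0 by rewrite mulf_neq0 // fmorph_eq0.
have ex0 : x0 = h * sg h * e ^+ 2 by rewrite -he mulrC divfK.
have /(mulfI N0) /eqP : h * sg h * sg e ^+ 2 = h * sg h * (g * e) ^+ 2.
  move: sg_x0; rewrite ex0 rmorphM rmorphM sgK [sg h * h]mulrC rmorphXn => ->.
  by rewrite exprMn; ring.
have sgg : sg g * g = -1 by rewrite mulrC.
have e_neqN : e != - e.
  apply: contraNneq e0 => ee; have /eqP : 2%:R * e = 0.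
    by rewrite mulr2n mulrDl mul1r {2}ee subrr.
  by rewrite mulf_eq0 (negbTE two_neq0).
rewrite eqf_sqr => /orP [] /eqP se; apply/(negP e_neqN)/eqP.
  by rewrite -{1}(sgK e) se rmorphM se mulrA sgg mulN1r.
by rewrite -{1}(sgK e) se rmorphN rmorphM se mulrN opprK mulrA sgg mulN1r.
Qed.

End MinusOneNorm.

Lemma conj_involutive (F : fieldType) (K : fieldExtType F) (sqa : K)
    (sigma : {rmorphism K -> K}) :
  <<1%AS; sqa>>%VS = fullv -> (forall c : F, sigma c%:A = c%:A) ->
  sigma sqa = - sqa -> involutive sigma.
Proof.
move=> full fixF sg_sqa x.
have sg_horner p z : p \is a polyOver 1%VS -> sigma p.[z] = p.[sigma z].
  move=> /polyOver1P [q ->]; rewrite -horner_map -map_poly_comp.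
  by congr (_.[_]); apply: eq_map_poly => c /=; rewrite ?in_algE fixF.
have /Fadjoin_polyP [p pO ->] : x \in <<1%AS; sqa>>%VS by rewrite full memvf.
by rewrite !sg_horner // sg_sqa rmorphN sg_sqa opprK.
Qed.

Theorem theorem2 (F : fieldType) (K : fieldExtType F) (a : F) (sqa : K)
    (sigma : {rmorphism K -> K}) :
  (2%:R != 0 :> F) ->
  a != 0 -> ~ (exists b : F, b ^+ 2 = a) ->
  sqa ^+ 2 = a%:A -> (<<1%AS; sqa>>)%VS = fullv ->
  (forall c : F, sigma c%:A = c%:A) -> sigma sqa = - sqa ->
  (exists X Y Z : set K,
    [/\ submodJ sigma X, submodJ sigma Y, submodJ sigma Z & dsum3 X Y Z] /\
    [/\ (minus1_norm sigma -> exists x0, F2basis X [set x0]) /\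
        (~ minus1_norm sigma -> zeroJ X),
        (exists B, freebasis sigma Y B) /\ fixedJ sigma Y = NJ sigma &
        trivialJ sigma Z]) /\
  (forall W B C, maxfreeJ sigma W -> freebasis sigma W B ->
     F2basis (NJ sigma) C -> (B #= C)%card).
Proof.
move=> two_neq0 a_neq0 _ sqa2 full fixF sg_sqa.
have sgK := conj_involutive full fixF sg_sqa.
have alg_eq0 (c : F) : (c%:A == 0 :> K) = (c == 0) by rewrite -in_algE fmorph_eq0.
have two_neq0K : 2%:R != 0 :> K.
  have <- : (2%:R : F)%:A = 2%:R :> K by rewrite -in_algE rmorph_nat.
  by rewrite alg_eq0.
have sqa_neq0 : sqa != 0.
  by apply: contra_neq a_neq0 => sqa0; apply/eqP; rewrite -alg_eq0 -sqa2 sqa0 expr0n.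
split; last by move=> W B C; apply: card_maxfree_basis.
have [m1|nm1] := pselect (minus1_norm sigma).
  have [x0 [x0_neq0 x0_fixed x0_nNJ]] :=
    minus1_norm_fixed_non_NJ sgK sqa_neq0 sg_sqa two_neq0K m1.
  have [X [Y [Z [XYZ [[X_basis _] YF ZT]]]]] :=
    J_decomposition sgK x0_neq0 x0_fixed (fun h => False_ind _ (x0_nNJ h)).
  exists X, Y, Z; split=> //; split=> //; split=> // _.
  by exists x0; apply: X_basis => /(NJ_sq sigma).
have one_fixed : sq (sigma 1 / 1) by rewrite rmorph1 divr1; exact: sq1.
have [X [Y [Z [XYZ [[_ X_zero] YF ZT]]]]] :=
  J_decomposition sgK (oner_neq0 K) one_fixed (fun _ => sq1 K).
exists X, Y, Z; split=> //; split=> //; split=> [/nm1 // | _].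
exact: X_zero (sq1 K).
Qed.
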